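(* Let $\mathbb A=(A_n)_{n\in\mathbb Z^+}$ be a sequence of invertible linear operators on $\mathbb R^d$ and $\mathcal S=\{\|\cdot\|_n;\ n\in\mathbb Z^+\}$ a sequence of norms such that there exist $K,a>0$ with $\|\mathcal A(m,n)x\|_m\le Ke^{a(m-n)}\|x\|_n$ and $\|\mathcal A(n,m)x\|_n\le Ke^{a(m-n)}\|x\|_m$ for all $m\ge n$, $x$. Let $\Sigma=\Sigma_{ED,\mathbb A,\mathcal S}$. Then: (i) for all sufficiently large $r>0$, $r\notin\Sigma$ and $S_r(n)=\mathbb R^d$ for all $n\in\mathbb Z^+$; (ii) for all sufficiently small $r>0$, $r\notin\Sigma$ and $S_r(n)=\{0\}$ for all $n\in\mathbb Z^+$.
   Context: $\mathbb Z^+=\{0,1,\dots\}$. $\mathcal A(m,n)=A_{m-1}\cdots A_n$ ($m>n$), $\mathrm{Id}$ ($m=n$), $A_m^{-1}\cdots A_{n-1}^{-1}$ ($m<n$). For $r>0$, $n\in\mathbb Z^+$: $S_r(n)=\{v\in\mathbb R^d:\ \sup_{m\ge n}r^{-(m-n)}\|\mathcal A(m,n)v\|_m<+\infty\}$. A sequence $(C_n)_{n\in\mathbb Z^+}$ with cocycle $\mathcal C$ admits a strong exponential dichotomy w.r.t. $\mathcal S$ if there exist $K>0$, $a\ge\lambda>0$ and projections $P_n$ (possibly $\mathrm{Id}$ or $0$) with $C_nP_n=P_{n+1}C_n$ such that for $m\ge n$, $x$, $Q_m=\mathrm{Id}-P_m$: $\|\mathcal C(m,n)P_nx\|_m\le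 Ke^{-\lambda(m-n)}\|x\|_n$, $\|\mathcal C(n,m)Q_mx\|_n\le Ke^{-\lambda(m-n)}\|x\|_m$, $\|\mathcal C(m,n)x\|_m\le Ke^{a(m-n)}\|x\|_n$, $\|\mathcal C(n,m)x\|_n\le Ke^{a(m-n)}\|x\|_m$. $\Sigma_{ED,\mathbb A,\mathcal S}$: set of $\tau>0$ such that $(\tau^{-1}A_n)_{n\in\mathbb Z^+}$ does not admit a strong exponential dichotomy w.r.t. $\mathcal S$. *)

From mathcomp Require Import all_boot all_order all_algebra.
From mathcomp Require Import all_classical all_reals all_analysis.
Set Implicit Arguments. Unset Strict Implicit. Unset Printing Implicit Defensive.
Import Order.TTheory GRing.Theory Num.Theory.
Local Open Scope ring_scope.
Local Open Scope classical_set_scope.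

Section Defs.
Variables (R : realType) (d : nat).

Fixpoint fwd (A : nat -> 'M[R]_d) (n k : nat) : 'M[R]_d :=
  match k with 0 => 1%:M | k'.+1 => A (n + k')%N *m fwd A n k' end.

Fixpoint bwd (A : nat -> 'M[R]_d) (m k : nat) : 'M[R]_d :=
  match k with 0 => 1%:M | k'.+1 => bwd A m k' *m invmx (A (m + k')%N) end.

Definition cocycle (A : nat -> 'M[R]_d) (m n : nat) : 'M[R]_d :=
  if (n <= m)%N then fwd A n (m - n) else bwd A m (n - m).

Definition is_norm (N : 'cV[R]_d -> R) : Prop :=
  [/\ forall x, N x = 0 -> x = 0,
      forall (c : R) x, N (c *: x) = `|c| * N x
    & forall x y, N (x + y) <= N x + N y].

Definition strong_ED (C : nat -> 'M[R]_d) (Nm : nat -> 'cV[R]_d -> R) : Prop :=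
  exists (K a lam : R) (P : nat -> 'M[R]_d),
    [/\ 0 < K, 0 < lam, lam <= a &
        forall n, P n *m P n = P n] /\
    (forall n, C n *m P n = P n.+1 *m C n) /\
        forall (m n : nat) (x : 'cV[R]_d), (n <= m)%N ->
          [/\ Nm m (cocycle C m n *m (P n *m x))
                <= K * expR (- lam * (m - n)%:R) * Nm n x,
              Nm n (cocycle C n m *m ((1%:M - P m) *m x))
                <= K * expR (- lam * (m - n)%:R) * Nm m x,
              Nm m (cocycle C m n *m x) <= K * expR (a * (m - n)%:R) * Nm n x &
              Nm n (cocycle C n m *m x) <= K * expR (a * (m - n)%:R) * Nm m x].

Definition SigmaED (A : nat -> 'M[R]_d) (Nm : nat -> 'cV[R]_d -> R) : set R :=
  [set tau | 0 < tau /\ ~ strong_ED (fun n => tau^-1 *: A n) Nm].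

Definition Sr (A : nat -> 'M[R]_d) (Nm : nat -> 'cV[R]_d -> R) (r : R) (n : nat)
  : set 'cV[R]_d :=
  [set v | exists M : R, forall m : nat, (n <= m)%N ->
       r ^- (m - n) * Nm m (cocycle A m n *m v) <= M].

End Defs.

(* Scaling [A] by [r^-1] multiplies the
   forward cocycle by [r^-k] and the backward one by [r^k], i.e. shifts the
   rate by [-ln r] forwards and [+ln r] backwards.  For [r > e^a] the scaled
   cocycle therefore contracts uniformly forwards, so [P = 1] gives a strong
   dichotomy and [r^-k A(m,n) v] stays bounded for every [v]; for
   [r < e^(-a)] it contracts uniformly backwards, so [P = 0] works, and
   [|v| <= K (r e^a)^k sup_m r^-(m-n) |A(m,n) v|] for every [k] forces
   [v = 0] as soon as that supremum is finite. *)

From mathcomp Require Import all_boot all_order all_algebra.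
From mathcomp Require Import all_classical all_reals all_analysis.
Set Implicit Arguments. Unset Strict Implicit. Unset Printing Implicit Defensive.
Import Order.TTheory GRing.Theory Num.Theory.
Local Open Scope ring_scope.
Local Open Scope classical_set_scope.

Section GeometricBound.
Import numFieldNormedType.Exports.

Lemma le0_geometric_bound (R : realType) (x c q : R) :
  `|q| < 1 -> (forall k, x <= c * q ^+ k) -> x <= 0.
Proof.
move=> q1 hx; apply: (ler_cvg_to (cvg_cst x) (cvg_geometric c q1)).
exact: nearW.
Qed.

End GeometricBound.

Section Norm.
Variables (R : realType) (d : nat) (N : 'cV[R]_d -> R).
Hypothesis hN : is_norm N.

Lemma is_norm0 : N 0 = 0.
Proof. by case: hN => _ hZ _; rewrite -(scale0r (0 : 'cV[R]_d)) hZ normr0 mul0r. Qed.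

Lemma is_norm_ge0 x : 0 <= N x.
Proof.
case: hN => _ hZ hD; have := hD x (- x).
by rewrite subrr is_norm0 -scaleN1r hZ normrN normr1 mul1r -mulr2n pmulrn_lge0.
Qed.

Lemma is_normZ c x : N (c *: x) = `|c| * N x.
Proof. by case: hN. Qed.

Lemma is_norm_le0 x : N x <= 0 -> x = 0.
Proof.
case: hN => h0 _ _ Nx; apply: h0.
by apply/eqP; rewrite eq_le Nx is_norm_ge0.
Qed.

End Norm.

Section Cocycle.
Variables (R : realType) (d : nat).
Implicit Types (A : nat -> 'M[R]_d) (c : R) (x : 'cV[R]_d).

Lemma cocycle_fwd A m n : (n <= m)%N -> cocycle A m n = fwd A n (m - n).
Proof. by rewrite /cocycle => ->. Qed.

Lemma cocycle_bwd A m n : (n <= m)%N -> cocycle A n m = bwd A n (m - n).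
Proof.
move=> nm; rewrite /cocycle; case: leqP => // mn.
have -> : m = n by apply/eqP; rewrite eqn_leq mn nm.
by rewrite subnn.
Qed.

Lemma bwd_fwd A n k : (forall i, A i \in unitmx) -> bwd A n k *m fwd A n k = 1%:M.
Proof.
move=> hA; elim: k => [|k IH] /=; first by rewrite mul1mx.
by rewrite -mulmxA (mulmxA (invmx _)) mulVmx // mul1mx.
Qed.

Lemma cocycleK A m n x : (forall i, A i \in unitmx) -> (n <= m)%N ->
  cocycle A n m *m (cocycle A m n *m x) = x.
Proof.
by move=> hA nm; rewrite cocycle_bwd // cocycle_fwd // mulmxA bwd_fwd // mul1mx.
Qed.

Lemma fwdZ A c n k : fwd (fun i => c *: A i) n k = c ^+ k *: fwd A n k.
Proof.
elim: k => [|k IH] /=; first by rewrite expr0 scale1r.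
by rewrite IH -scalemxAr !scalemxAl scalerA -exprSr.
Qed.

Lemma bwdZ A c m k : c != 0 -> (forall i, A i \in unitmx) ->
  bwd (fun i => c *: A i) m k = c^-1 ^+ k *: bwd A m k.
Proof.
move=> c0 hA; elim: k => [|k IH] /=; first by rewrite expr0 scale1r.
rewrite IH invmxZ; last by rewrite unitmxZ ?unitfE.
by rewrite -scalemxAr !scalemxAl scalerA -exprS.
Qed.

Lemma cocycleZ_fwd A c m n x : (n <= m)%N ->
  cocycle (fun i => c *: A i) m n *m x = c ^+ (m - n) *: (cocycle A m n *m x).
Proof. by move=> nm; rewrite !cocycle_fwd // fwdZ scalemxAl. Qed.

Lemma cocycleZ_bwd A c m n x : c != 0 -> (forall i, A i \in unitmx) ->
  (n <= m)%N ->
  cocycle (fun i => c *: A i) n m *m x = c^-1 ^+ (m - n) *: (cocycle A n m *m x).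
Proof. by move=> c0 hA nm; rewrite !cocycle_bwd // bwdZ // scalemxAl. Qed.

End Cocycle.

Section DichotomyCriteria.
Variables (R : realType) (d : nat) (C : nat -> 'M[R]_d) (Nm : nat -> 'cV[R]_d -> R).
Variables (K lam b : R).
Hypotheses (hN : forall n, is_norm (Nm n)) (hK : 0 < K) (hlam : 0 < lam) (hlamb : lam <= b).

Let decay_le_growth m k x :
  K * expR (- lam * k%:R) * Nm m x <= K * expR (b * k%:R) * Nm m x.
Proof.
apply: ler_wpM2r; first exact: is_norm_ge0.
by rewrite ler_pM2l // ler_expR ler_wpM2r // (le_trans _ hlamb) // (ge0_cp (ltW hlam)).
Qed.

Let bound_ge0 c m x : 0 <= K * expR c * Nm m x.
Proof. by rewrite mulr_ge0 ?mulr_ge0 ?expR_ge0 ?is_norm_ge0 // ltW. Qed.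

Lemma strong_ED_contracting :
  (forall m n x, (n <= m)%N ->
     Nm m (cocycle C m n *m x) <= K * expR (- lam * (m - n)%:R) * Nm n x) ->
  (forall m n x, (n <= m)%N ->
     Nm n (cocycle C n m *m x) <= K * expR (b * (m - n)%:R) * Nm m x) ->
  strong_ED C Nm.
Proof.
move=> hfwd hbwd; exists K, b, lam, (fun _ => 1%:M).
split; first by split=> // n; rewrite mul1mx.
split=> [n|m n x nm]; first by rewrite mulmx1 mul1mx.
rewrite mul1mx subrr mul0mx mulmx0 is_norm0 //; split.
- exact: hfwd.
- exact: bound_ge0.
- exact: le_trans (hfwd _ _ _ nm) (decay_le_growth _ _ _).
- exact: hbwd.
Qed.

Lemma strong_ED_expanding :
  (forall m n x, (n <= m)%N ->
     Nm m (cocycle C m n *m x) <= K * expR (b * (m - n)%:R) * Nm n x) ->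
  (forall m n x, (n <= m)%N ->
     Nm n (cocycle C n m *m x) <= K * expR (- lam * (m - n)%:R) * Nm m x) ->
  strong_ED C Nm.
Proof.
move=> hfwd hbwd; exists K, b, lam, (fun _ => 0).
split; first by split=> // n; rewrite mul0mx.
split=> [n|m n x nm]; first by rewrite mulmx0 mul0mx.
rewrite mul0mx mulmx0 is_norm0 // subr0 mul1mx; split.
- exact: bound_ge0.
- exact: hbwd.
- exact: hfwd.
- exact: le_trans (hbwd _ _ _ nm) (decay_le_growth _ _ _).
Qed.

End DichotomyCriteria.

Definition bounded_growth (R : realType) (d : nat) (A : nat -> 'M[R]_d)
    (Nm : nat -> 'cV[R]_d -> R) (K a : R) : Prop :=
  forall (m n : nat) (x : 'cV[R]_d), (n <= m)%N ->
    Nm m (cocycle A m n *m x) <= K * expR (a * (m - n)%:R) * Nm n x /\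
    Nm n (cocycle A n m *m x) <= K * expR (a * (m - n)%:R) * Nm m x.

Section ScaledCocycle.
Variables (R : realType) (d : nat) (A : nat -> 'M[R]_d) (Nm : nat -> 'cV[R]_d -> R).
Variables (K a : R).
Hypotheses (hA : forall n, A n \in unitmx) (hN : forall n, is_norm (Nm n)).
Hypotheses (hK : 0 < K) (ha : 0 <= a) (hg : bounded_growth A Nm K a).

Local Notation scaled r := (fun i => r^-1 *: A i).

Lemma scaled_cocycle_fwd_norm (r : R) m n x : 0 < r -> (n <= m)%N ->
  Nm m (cocycle (scaled r) m n *m x) = r ^- (m - n) * Nm m (cocycle A m n *m x).
Proof.
move=> r0 nm; rewrite cocycleZ_fwd // is_normZ // normrX.
by rewrite ger0_norm ?invr_ge0 ?ltW // exprVn.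
Qed.

Lemma scaled_cocycle_bwd_norm (r : R) m n x : 0 < r -> (n <= m)%N ->
  Nm n (cocycle (scaled r) n m *m x) = r ^+ (m - n) * Nm n (cocycle A n m *m x).
Proof.
move=> r0 nm; rewrite cocycleZ_bwd ?invr_neq0 ?gt_eqF // invrK is_normZ //.
by rewrite normrX ger0_norm ?ltW.
Qed.

Lemma scaled_fwd_bound (r : R) m n x : 0 < r -> (n <= m)%N ->
  Nm m (cocycle (scaled r) m n *m x)
    <= K * expR ((a - ln r) * (m - n)%:R) * Nm n x.
Proof.
move=> r0 nm; rewrite scaled_cocycle_fwd_norm // mulrBl expRB.
rewrite (expRM_natr _ (ln r)) lnK ?posrE //.
rewrite [leRHS](_ : _ = r ^- (m - n) * (K * expR (a * (m - n)%:R) * Nm n x)).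
  by rewrite ler_pM2l ?invr_gt0 ?exprn_gt0 //; case: (hg x nm).
by rewrite mulrA mulrAC mulrC.
Qed.

Lemma scaled_bwd_bound (r : R) m n x : 0 < r -> (n <= m)%N ->
  Nm n (cocycle (scaled r) n m *m x)
    <= K * expR ((ln r + a) * (m - n)%:R) * Nm m x.
Proof.
move=> r0 nm; rewrite scaled_cocycle_bwd_norm // mulrDl expRD.
rewrite (expRM_natr _ (ln r)) lnK ?posrE //.
rewrite [leRHS](_ : _ = r ^+ (m - n) * (K * expR (a * (m - n)%:R) * Nm m x)).
  by rewrite ler_pM2l ?exprn_gt0 //; case: (hg x nm).
by rewrite mulrCA !mulrA.
Qed.

Lemma strong_ED_scaled_large (r : R) : expR a < r -> strong_ED (scaled r) Nm.
Proof.
move=> ar; have r0 : 0 < r := lt_trans (expR_gt0 a) ar.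
have alnr : a < ln r by rewrite -ltr_expR lnK.
apply: (strong_ED_contracting (K := K) (lam := ln r - a) (b := ln r + a)) => //.
- by rewrite subr_gt0.
- by rewrite lerD2l (ge0_cp ha).
- by move=> m n x nm; rewrite opprB; apply: scaled_fwd_bound.
- by move=> m n x nm; apply: scaled_bwd_bound.
Qed.

Lemma Sr_scaled_large (r : R) n : expR a <= r -> Sr A Nm r n = setT.
Proof.
move=> ar; have r0 : 0 < r := lt_le_trans (expR_gt0 a) ar.
have alnr : a <= ln r by rewrite -ler_expR lnK.
apply/seteqP; split=> // v _; exists (K * Nm n v) => m nm.
rewrite -scaled_cocycle_fwd_norm //; apply: le_trans (scaled_fwd_bound _ r0 nm) _.
apply: ler_wpM2r; first exact: is_norm_ge0.
by rewrite ger_pMr // expR_le1 mulr_le0_ge0 ?subr_le0.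
Qed.

Lemma strong_ED_scaled_small (r : R) : 0 < r -> r < expR (- a) -> strong_ED (scaled r) Nm.
Proof.
move=> r0 ra; have lnra : ln r < - a by rewrite -ltr_expR lnK.
apply: (strong_ED_expanding (K := K) (lam := - a - ln r) (b := a - ln r)) => //.
- by rewrite subr_gt0.
- by rewrite lerD2r (ge0_cp ha).
- by move=> m n x nm; apply: scaled_fwd_bound.
- by move=> m n x nm; rewrite opprB opprK; apply: scaled_bwd_bound.
Qed.

Lemma Sr_scaled_small (r : R) n : 0 < r -> r < expR (- a) -> Sr A Nm r n = [set 0].
Proof.
move=> r0 ra; have lnra : ln r < - a by rewrite -ltr_expR lnK.
apply/seteqP; split=> v; last by move=> ->; exists 0 => m _; rewrite mulmx0 is_norm0 // mulr0.
case=> M hM; apply: (is_norm_le0 (hN n)).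
have hunit i : scaled r i \in unitmx by rewrite unitmxZ ?unitfE ?invr_neq0 ?gt_eqF.
have decay k : Nm n v <= K * M * expR (ln r + a) ^+ k.
  have nk : (n <= n + k)%N := leq_addr k n.
  rewrite -{1}(cocycleK v hunit nk); apply: le_trans (scaled_bwd_bound _ r0 nk) _.
  have hMk : Nm (n + k) (cocycle (scaled r) (n + k) n *m v) <= M.
    by rewrite scaled_cocycle_fwd_norm //; apply: hM.
  rewrite addKn expRM_natr [leRHS]mulrAC; apply: ler_wpM2l hMk.
  by rewrite mulr_ge0 ?exprn_ge0 ?expR_ge0 ?ltW.
apply: le0_geometric_bound decay.
by rewrite ger0_norm ?expR_ge0 // expR_lt1 -ltrBrDr sub0r.
Qed.

End ScaledCocycle.

Theorem lemma7p4 (R : realType) (d : nat) (A : nat -> 'M[R]_d)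
  (Nm : nat -> 'cV[R]_d -> R)
  (hA : forall n, A n \in unitmx)
  (hN : forall n, is_norm (Nm n))
  (hgrowth : exists K a : R, [/\ 0 < K, 0 < a &
     forall (m n : nat) (x : 'cV[R]_d), (n <= m)%N ->
       Nm m (cocycle A m n *m x) <= K * expR (a * (m - n)%:R) * Nm n x /\
       Nm n (cocycle A n m *m x) <= K * expR (a * (m - n)%:R) * Nm m x]) :
  (exists r0 : R, 0 < r0 /\ forall r : R, r0 <= r ->
     ~ SigmaED A Nm r /\ forall n : nat, Sr A Nm r n = setT) /\
  (exists r0 : R, 0 < r0 /\ forall r : R, 0 < r -> r <= r0 ->
     ~ SigmaED A Nm r /\ forall n : nat, Sr A Nm r n = [set 0]).
Proof.
have [K [a [hK /ltW ha hg]]] := hgrowth.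
split.
- exists (expR (a + 1)); split=> [|r ar]; first exact: expR_gt0.
  have {}ar : expR a < r by apply: lt_le_trans _ ar; rewrite ltr_expR ltrDl.
  split; first by case=> _; apply; exact: (strong_ED_scaled_large hA hN hK ha hg ar).
  by move=> n; exact: (Sr_scaled_large hN hK hg n (ltW ar)).
- exists (expR (- (a + 1))); split=> [|r r0 ra]; first exact: expR_gt0.
  have {}ra : r < expR (- a) by apply: le_lt_trans ra _; rewrite ltr_expR ltrN2 ltrDl.
  split; first by case=> _; apply; exact: (strong_ED_scaled_small hA hN hK ha hg r0 ra).
  by move=> n; exact: (Sr_scaled_small hA hN hK hg n r0 ra).
Qed.
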